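(* Let $M$ be an OHFM in $\mathcal{C}$ and let $V=\mathbb{R}\otimes_\mathbb{Z}\mathrm{gp}(M)$. Let $\mathcal{N}$ be the set of faces $F$ of $\mathsf{cone}_V(M)$ such that the face submonoid $M\cap F$ is not a UFM. Then either $\mathcal{N}=\emptyset$, or there is a face $F_0$ of $\mathsf{cone}_V(M)$ such that $\mathcal{N}=\{F : F \text{ a face of } \mathsf{cone}_V(M),\ F_0\subseteq F\}$, i.e., $\mathcal{N}$ is the interval $[F_0,\mathsf{cone}_V(M)]$ of the face lattice.
   Context: Convention: all monoids are commutative, cancellative, and reduced, written additively; atoms $\mathcal{A}(M)=M^\bullet\setminus(M^\bullet+M^\bullet)$ with $M^\bullet=M\setminus\{0\}$. $\mathcal{C}$ is the class of monoids isomorphic to a submonoid of a free commutative monoid of finite rank (equivalently, of $(\mathbb{N}^d,+)$). $M$ is regarded as a submonoid of $V$; $\mathsf{cone}_V(M)$ is the set of finite nonnegative linear combinations of elements of $M$. A face of a cone $C$ is a cone $F\subseteq C$ such that whenever $x,y\in C$ and $F$ meets the open segment between $x$ and $y$, then $x,y\in F$; the face lattice is the set of faces ordered by inclusion; a face submonoid is $M\cap F$ for a face $F$. A factorization of $x$ is a multiset of atoms summing to $x$, its length the number of atoms with multiplicity. UFM: every element has exactly one factorization. OHFM: every element has a factorization and for each nonzero $x$, two factorizations of $x$ of equal length coincide. *)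

From Stdlib Require Import Reals List Permutation.
Open Scope R_scope.

(* Elements of N^d are represented as nat -> nat functions vanishing at
   coordinates >= d; real vectors as nat -> R. *)
Definition nvec := nat -> nat.
Definition rvec := nat -> R.

Definition nzero : nvec := fun _ => 0%nat.
Definition nadd (x y : nvec) : nvec := fun i => (x i + y i)%nat.
Definition nsum (l : list nvec) : nvec := fold_right nadd nzero l.

Definition submonoid_Nd (d : nat) (M : nvec -> Prop) : Prop :=
  (forall x, M x -> forall i, (d <= i)%nat -> x i = 0%nat) /\
  M nzero /\
  (forall x y, M x -> M y -> M (nadd x y)).

Definition is_atom (M : nvec -> Prop) (a : nvec) : Prop :=
  M a /\ a <> nzero /\
  ~ (exists y z, M y /\ M z /\ y <> nzero /\ z <> nzero /\ a = nadd y z).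

(* a factorization of x: a multiset (list up to permutation) of atoms summing to x *)
Definition is_factorization (M : nvec -> Prop) (x : nvec) (l : list nvec) : Prop :=
  Forall (is_atom M) l /\ nsum l = x.

Definition UFM (M : nvec -> Prop) : Prop :=
  forall x, M x ->
    (exists l, is_factorization M x l) /\
    (forall l1 l2, is_factorization M x l1 -> is_factorization M x l2 ->
       Permutation l1 l2).

Definition OHFM (M : nvec -> Prop) : Prop :=
  (forall x, M x -> exists l, is_factorization M x l) /\
  (forall x, M x -> x <> nzero ->
     forall l1 l2, is_factorization M x l1 -> is_factorization M x l2 ->
       length l1 = length l2 -> Permutation l1 l2).

Definition rzero : rvec := fun _ => 0.
Definition radd (u v : rvec) : rvec := fun i => u i + v i.
Definition rscale (c : R) (u : rvec) : rvec := fun i => c * u i.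
Definition embed (x : nvec) : rvec := fun i => INR (x i).

Definition cone_of (M : nvec -> Prop) (v : rvec) : Prop :=
  exists l : list (R * nvec),
    Forall (fun p => 0 <= fst p /\ M (snd p)) l /\
    v = fold_right (fun p acc => radd (rscale (fst p) (embed (snd p))) acc) rzero l.

Definition is_cone (F : rvec -> Prop) : Prop :=
  F rzero /\ (forall u v, F u -> F v -> F (radd u v)) /\
  (forall c u, 0 <= c -> F u -> F (rscale c u)).

Definition is_face (C F : rvec -> Prop) : Prop :=
  is_cone F /\ (forall v, F v -> C v) /\
  (forall x y, C x -> C y ->
     (exists t, 0 < t < 1 /\ F (radd (rscale (1 - t) x) (rscale t y))) ->
     F x /\ F y).

Definition face_submonoid (M : nvec -> Prop) (F : rvec -> Prop) : nvec -> Prop :=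
  fun x => M x /\ F (embed x).

(* A face submonoid M ∩ F fails to be a UFM exactly
   when it contains two factorizations of one element of different lengths
   (a "length-gap pair"; equal lengths are excluded by the OHFM property).
   Cancelling common atoms turns any gap pair into a disjoint one, and the
   key lemma [gap_pair_support] shows that the atoms of a disjoint gap pair
   (u, u') occur in every gap pair (y, y'): the two equal-length
   factorizations  k2·u' + k1·y  and  k2·u + k1·y'  (with k1, k2 the length
   gaps) must coincide as multisets by the OHFM property, and counting
   occurrences gives the claim.  Since faces are extremal for sums, the atoms
   of a gap pair lie in every non-factorial face.  Hence, if some face is
   non-factorial, the intersection F0 of all non-factorial faces is a face
   containing a gap pair, and a face F is non-factorial iff F0 ⊆ F. *)

From Stdlib Require Import Reals List Permutation.
From Stdlib Require Import Lra Lia FunctionalExtensionality Classical ClassicalEpsilon.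
Open Scope R_scope.

Lemma nadd_comm x y : nadd x y = nadd y x.
Proof. extensionality i; unfold nadd; lia. Qed.

Lemma nadd_assoc x y z : nadd x (nadd y z) = nadd (nadd x y) z.
Proof. extensionality i; unfold nadd; lia. Qed.

Lemma nadd_0l x : nadd nzero x = x.
Proof. extensionality i; unfold nadd, nzero; lia. Qed.

Lemma nadd_cancel a x y : nadd a x = nadd a y -> x = y.
Proof.
  intro H; extensionality i.
  assert (Hi := f_equal (fun f => f i) H); cbv beta in Hi; unfold nadd in Hi; lia.
Qed.

Lemma nadd_eq_zero x y : nadd x y = nzero -> x = nzero.
Proof.
  intro H; extensionality i.
  assert (Hi := f_equal (fun f => f i) H); cbv beta in Hi; unfold nadd, nzero in *; lia.
Qed.

Lemma nsum_app l1 l2 : nsum (l1 ++ l2) = nadd (nsum l1) (nsum l2).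
Proof.
  induction l1 as [|a l1 IH]; simpl; [now rewrite nadd_0l|].
  unfold nsum in *; rewrite IH; apply nadd_assoc.
Qed.

Lemma nsum_perm l1 l2 : Permutation l1 l2 -> nsum l1 = nsum l2.
Proof.
  induction 1; unfold nsum in *; simpl; try congruence.
  rewrite !nadd_assoc, (nadd_comm y x); reflexivity.
Qed.

Fixpoint rep (k : nat) (l : list nvec) : list nvec :=
  match k with O => nil | S k => l ++ rep k l end.

Lemma nsum_rep_eq k l l' : nsum l = nsum l' -> nsum (rep k l) = nsum (rep k l').
Proof. intro H; induction k; simpl; auto. rewrite !nsum_app, H, IHk; auto. Qed.

Lemma rep_length k l : length (rep k l) = (k * length l)%nat.
Proof. induction k; simpl; auto. rewrite length_app, IHk; lia. Qed.

Lemma Forall_rep (P : nvec -> Prop) k l : Forall P l -> Forall P (rep k l).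
Proof. intro H; induction k; simpl; auto. apply Forall_app; auto. Qed.

Definition nvec_eq_dec : forall x y : nvec, {x = y} + {x <> y} :=
  fun x y => excluded_middle_informative (x = y).

Lemma count_rep k l a :
  count_occ nvec_eq_dec (rep k l) a = (k * count_occ nvec_eq_dec l a)%nat.
Proof. induction k; simpl; auto. rewrite count_occ_app, IHk; lia. Qed.

Lemma embed_nadd x y : embed (nadd x y) = radd (embed x) (embed y).
Proof. extensionality i; unfold embed, radd, nadd; apply plus_INR. Qed.

Lemma embed_nzero : embed nzero = rzero.
Proof. extensionality i; reflexivity. Qed.

Lemma cone_nsum (F : rvec -> Prop) l :
  is_cone F -> Forall (fun a => F (embed a)) l -> F (embed (nsum l)).
Proof.
  intros [F0 [Fadd _]]. induction 1; simpl; [now rewrite embed_nzero|].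
  rewrite embed_nadd; auto.
Qed.

(* A face G of a cone C is extremal for sums: if u, v ∈ C and u + v ∈ G then
   u, v ∈ G (write u + v as the midpoint of 2u and 2v). *)
Lemma face_of_sum (C G : rvec -> Prop) u v :
  is_cone C -> is_face C G -> C u -> C v -> G (radd u v) -> G u /\ G v.
Proof.
  intros [_ [_ Cscale]] [[_ [_ Gscale]] [_ Gext]] Cu Cv Guv.
  assert (Double : forall w, w = rscale (1/2) (rscale 2 w))
    by (intro w; extensionality i; unfold rscale; field).
  destruct (Gext (rscale 2 u) (rscale 2 v)) as [G2u G2v];
    [apply Cscale; auto; lra | apply Cscale; auto; lra | |].
  - exists (1/2); split; [lra|].
    replace (radd (rscale (1 - 1/2) (rscale 2 u)) (rscale (1/2) (rscale 2 v)))
      with (radd u v); auto.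
    extensionality i; unfold radd, rscale; field.
  - rewrite (Double u), (Double v); split; apply Gscale; auto; lra.
Qed.

Lemma face_nsum (C G : rvec -> Prop) l :
  is_cone C -> is_face C G -> Forall (fun a => C (embed a)) l ->
  G (embed (nsum l)) -> Forall (fun a => G (embed a)) l.
Proof.
  intros HC HG. induction 1 as [|a l Ca Cl IH]; intros Gsum; constructor;
    simpl in Gsum; rewrite embed_nadd in Gsum;
    apply face_of_sum with (C := C) in Gsum; auto; try tauto;
    apply cone_nsum; auto.
Qed.

Lemma intersection_face (C : rvec -> Prop) (P : (rvec -> Prop) -> Prop) :
  is_cone C -> (forall G, P G -> is_face C G) ->
  is_face C (fun v => C v /\ forall G, P G -> G v).
Proof.
  intros [C0 [Cadd Cscale]] Hfaces.
  assert (Cones : forall G, P G -> is_cone G) by (intros G HG; apply (Hfaces G HG)).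
  split; [split; [|split]|split].
  - split; auto. intros G HG; exact (proj1 (Cones G HG)).
  - intros x y [Cx Gx] [Cy Gy]; split; auto.
    intros G HG; destruct (Cones G HG) as [_ [Gadd _]]; exact (Gadd x y (Gx G HG) (Gy G HG)).
  - intros c x Hc [Cx Gx]; split; auto.
    intros G HG; destruct (Cones G HG) as [_ [_ Gscale]]; exact (Gscale c x Hc (Gx G HG)).
  - intros v Hv; exact (proj1 Hv).
  - intros x y Cx Cy [t [Ht Hxy]].
    assert (Both : forall G, P G -> G x /\ G y).
    { intros G HG. apply (Hfaces G HG); auto. exists t; split; auto. apply Hxy, HG. }
    split; split; auto; intros G HG; apply (Both G HG).
Qed.

Section ConeOfMonoid.

Variable M : nvec -> Prop.

Definition cone_combination (l : list (R * nvec)) : rvec :=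
  fold_right (fun p acc => radd (rscale (fst p) (embed (snd p))) acc) rzero l.

Lemma cone_combination_app l1 l2 :
  cone_combination (l1 ++ l2) = radd (cone_combination l1) (cone_combination l2).
Proof.
  induction l1 as [|p l1 IH]; simpl.
  - extensionality i; unfold radd, rzero; ring.
  - rewrite IH; extensionality i; unfold radd; ring.
Qed.

Lemma cone_combination_scale c l :
  cone_combination (map (fun p => (c * fst p, snd p)) l) = rscale c (cone_combination l).
Proof.
  induction l as [|p l IH]; simpl.
  - extensionality i; unfold rscale, rzero; ring.
  - rewrite IH; extensionality i; unfold radd, rscale; ring.
Qed.

Lemma cone_of_is_cone : is_cone (cone_of M).
Proof.
  split; [|split].
  - exists nil; split; auto.
  - intros u v [l1 [F1 ->]] [l2 [F2 ->]]. exists (l1 ++ l2).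
    split; [apply Forall_app; auto | symmetry; apply cone_combination_app].
  - intros c u Hc [l [Fl ->]]. exists (map (fun p => (c * fst p, snd p)) l). split.
    + rewrite Forall_map. eapply Forall_impl; [|exact Fl].
      intros [r x] [Hr Mx]; simpl in *; split; auto. apply Rmult_le_pos; auto.
    + symmetry; apply cone_combination_scale.
Qed.

Lemma cone_embed x : M x -> cone_of M (embed x).
Proof.
  intro Mx. exists ((1, x) :: nil). split; [constructor; simpl; auto; split; auto; lra|].
  simpl; extensionality i; unfold radd, rscale, rzero; ring.
Qed.

Lemma atom_face_submonoid G a :
  is_face (cone_of M) G -> (is_atom (face_submonoid M G) a <-> is_atom M a /\ G (embed a)).
Proof.
  intro HG. split.
  - intros [[Ma Ga] [Hnz Hirr]]. repeat split; auto.
    intros [y [z [My [Mz [Hy [Hz ->]]]]]]. apply Hirr.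
    rewrite embed_nadd in Ga.
    destruct (face_of_sum (cone_of M) G (embed y) (embed z)) as [Gy Gz];
      auto using cone_of_is_cone, cone_embed.
    exists y, z; repeat split; auto.
  - intros [[Ma [Hnz Hirr]] Ga]. repeat split; auto.
    intros [y [z [[My _] [[Mz _] [Hy [Hz E]]]]]]. apply Hirr. exists y, z; auto.
Qed.

End ConeOfMonoid.

Lemma atoms_sum_zero (M : nvec -> Prop) l :
  Forall (is_atom M) l -> nsum l = nzero -> l = nil.
Proof.
  intros Hl Hsum. destruct l as [|a l]; auto.
  inversion Hl as [|? ? [_ [Hnz _]] _]; subst.
  exfalso; apply Hnz; exact (nadd_eq_zero a (nsum l) Hsum).
Qed.

Definition gap_pair (M : nvec -> Prop) (z z' : list nvec) : Prop :=
  Forall (is_atom M) z /\ Forall (is_atom M) z' /\ nsum z = nsum z' /\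
  (length z < length z')%nat.

Definition disjoint (l l' : list nvec) : Prop := forall a, In a l -> ~ In a l'.

Lemma gap_pair_disjoint M z z' :
  gap_pair M z z' -> exists w w', gap_pair M w w' /\ disjoint w w'.
Proof.
  remember (length z) as n eqn:Hn. revert z z' Hn.
  induction n as [n IH] using Wf_nat.lt_wf_ind; intros z z' Hn Hgap.
  destruct (classic (exists a, In a z /\ In a z')) as [[a [Ha Ha']]|Hnone].
  - apply in_split in Ha as [r1 [r2 ->]]. apply in_split in Ha' as [s1 [s2 ->]].
    destruct Hgap as [Fz [Fz' [Hsum Hlen]]].
    apply Forall_app in Fz as [Fr1 Fr2]; inversion Fr2; subst.
    apply Forall_app in Fz' as [Fs1 Fs2]; inversion Fs2; subst.
    rewrite !length_app in Hlen; simpl in Hlen.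
    apply (IH (length (r1 ++ r2))) with (z := r1 ++ r2) (z' := s1 ++ s2); auto.
    + rewrite !length_app; simpl; lia.
    + repeat split; try (apply Forall_app; split; auto).
      * apply (nadd_cancel a). change (nsum (a :: r1 ++ r2) = nsum (a :: s1 ++ s2)).
        rewrite (nsum_perm _ _ (Permutation_middle r1 r2 a)),
                (nsum_perm _ _ (Permutation_middle s1 s2 a)); exact Hsum.
      * rewrite !length_app; lia.
  - exists z, z'; split; auto. intros a Ha Ha'; apply Hnone; eauto.
Qed.

Section OHFM.

Variables (d : nat) (M : nvec -> Prop).
Hypothesis Hsub : submonoid_Nd d M.
Hypothesis Hohfm : OHFM M.

Lemma M_nsum_atoms l : Forall (is_atom M) l -> M (nsum l).
Proof.
  destruct Hsub as [_ [M0 Madd]]. induction 1 as [|a l [Ma _] _ IH]; simpl; auto.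
Qed.

Lemma distinct_factorizations_gap z z' :
  Forall (is_atom M) z -> Forall (is_atom M) z' -> nsum z = nsum z' ->
  ~ Permutation z z' -> gap_pair M z z' \/ gap_pair M z' z.
Proof.
  intros Fz Fz' Hsum Hperm.
  destruct (PeanoNat.Nat.lt_trichotomy (length z) (length z')) as [Hlt|[Heq|Hgt]];
    [left; repeat split; auto | exfalso | right; repeat split; auto].
  apply Hperm. destruct (classic (nsum z = nzero)) as [Hzero|Hnz].
  - rewrite (atoms_sum_zero M z), (atoms_sum_zero M z'); auto; congruence.
  - apply (proj2 Hohfm (nsum z)); auto using M_nsum_atoms; split; auto.
Qed.

Lemma nonUFM_gap_pair G :
  is_face (cone_of M) G -> ~ UFM (face_submonoid M G) ->
  exists z z', gap_pair M z z' /\ Forall (fun a => G (embed a)) (z ++ z').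
Proof.
  intros HG HU. apply not_all_ex_not in HU as [x Hx].
  apply imply_to_and in Hx as [[Mx Gx] Hx]. apply not_and_or in Hx as [Hnofact|Hnonunique].
  - exfalso; apply Hnofact.
    destruct (proj1 Hohfm x Mx) as [l [Fl Hsum]]; subst x.
    assert (Gl : Forall (fun a => G (embed a)) l).
    { apply (face_nsum (cone_of M)); auto using cone_of_is_cone.
      eapply Forall_impl; [|exact Fl]; intros a Ha; apply cone_embed, Ha. }
    exists l; split; auto. rewrite Forall_forall in *.
    intros a Ha; apply atom_face_submonoid; auto.
  - apply not_all_ex_not in Hnonunique as [l1 Hx]. apply not_all_ex_not in Hx as [l2 Hx].
    apply imply_to_and in Hx as [[F1 E1] Hx]. apply imply_to_and in Hx as [[F2 E2] Hperm].
    assert (Split : forall l, Forall (is_atom (face_submonoid M G)) l ->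
              Forall (is_atom M) l /\ Forall (fun a => G (embed a)) l).
    { intros l Hl; rewrite Forall_forall in Hl; rewrite !Forall_forall; split; intros a Ha;
        apply (proj1 (atom_face_submonoid M G a HG)), Hl, Ha. }
    destruct (Split l1 F1) as [A1 G1], (Split l2 F2) as [A2 G2].
    destruct (distinct_factorizations_gap l1 l2) as [Hgap|Hgap]; try congruence.
    + exists l1, l2; split; auto; apply Forall_app; auto.
    + exists l2, l1; split; auto; apply Forall_app; auto.
Qed.

Lemma gap_pair_not_UFM G z z' :
  is_face (cone_of M) G -> gap_pair M z z' -> Forall (fun a => G (embed a)) (z ++ z') ->
  ~ UFM (face_submonoid M G).
Proof.
  intros HG [Fz [Fz' [Hsum Hlen]]] Gzz' HU. apply Forall_app in Gzz' as [Gz Gz'].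
  assert (Atoms : forall l, Forall (is_atom M) l -> Forall (fun a => G (embed a)) l ->
            Forall (is_atom (face_submonoid M G)) l).
  { intros l Al Gl; rewrite Forall_forall in *; intros a Ha.
    apply atom_face_submonoid; auto. }
  assert (Hz : face_submonoid M G (nsum z))
    by (split; [apply M_nsum_atoms | apply cone_nsum; [apply HG|]]; auto).
  assert (Hperm : Permutation z z')
    by (apply (proj2 (HU _ Hz)); split; auto).
  apply Permutation_length in Hperm; lia.
Qed.

(* With k1, k2 the
   length gaps, k2·u' + k1·y and k2·u + k1·y' are factorizations of equal
   length of one element, hence equal multisets. *)
Lemma gap_pair_support u u' y y' :
  gap_pair M u u' -> disjoint u u' -> gap_pair M y y' -> incl u y /\ incl u' y'.
Proof.
  intros [Fu [Fu' [Eu Lu]]] Hdisj [Fy [Fy' [Ey Ly]]].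
  set (k1 := (length u' - length u)%nat). set (k2 := (length y' - length y)%nat).
  set (L := rep k2 u' ++ rep k1 y). set (L' := rep k2 u ++ rep k1 y').
  assert (FL : Forall (is_atom M) L) by (apply Forall_app; split; apply Forall_rep; auto).
  assert (FL' : Forall (is_atom M) L') by (apply Forall_app; split; apply Forall_rep; auto).
  assert (HlenL : length L = (k2 * length u' + k1 * length y)%nat)
    by (unfold L; rewrite length_app, !rep_length; lia).
  assert (Hperm : Permutation L L').
  { apply (proj2 Hohfm (nsum L)); auto using M_nsum_atoms.
    - intro Hzero. apply (atoms_sum_zero M L FL) in Hzero.
      rewrite Hzero in HlenL; simpl in HlenL; unfold k2 in HlenL; nia.
    - split; auto.
    - split; auto. unfold L, L'; rewrite !nsum_app; f_equal; apply nsum_rep_eq; auto.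
    - unfold L'; rewrite HlenL, length_app, !rep_length; unfold k1, k2; nia. }
  assert (Hcount : forall a,
    (k2 * count_occ nvec_eq_dec u' a + k1 * count_occ nvec_eq_dec y a =
     k2 * count_occ nvec_eq_dec u a + k1 * count_occ nvec_eq_dec y' a)%nat).
  { intro a. rewrite (Permutation_count_occ nvec_eq_dec) in Hperm. specialize (Hperm a).
    unfold L, L' in Hperm; rewrite !count_occ_app, !count_rep in Hperm; exact Hperm. }
  assert (k1 > 0)%nat by (unfold k1; lia). assert (k2 > 0)%nat by (unfold k2; lia).
  split; intros a Ha; specialize (Hcount a);
    rewrite (count_occ_In nvec_eq_dec) in Ha |- *.
  - assert (Hnot : ~ In a u') by (apply Hdisj; apply (count_occ_In nvec_eq_dec); lia).
    rewrite (count_occ_not_In nvec_eq_dec) in Hnot. nia.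
  - assert (Hnot : ~ In a u)
      by (intro Hin; apply (Hdisj a Hin), (count_occ_In nvec_eq_dec); lia).
    rewrite (count_occ_not_In nvec_eq_dec) in Hnot. nia.
Qed.

Lemma gap_pair_in_nonUFM_faces u u' G :
  gap_pair M u u' -> disjoint u u' ->
  is_face (cone_of M) G -> ~ UFM (face_submonoid M G) ->
  Forall (fun a => G (embed a)) (u ++ u').
Proof.
  intros Hu Hdisj HG HU.
  destruct (nonUFM_gap_pair G HG HU) as [y [y' [Hy Gyy']]].
  destruct (gap_pair_support u u' y y' Hu Hdisj Hy) as [Iu Iu'].
  rewrite Forall_forall in *. intros a Ha. apply Gyy'.
  apply in_app_or in Ha as [Ha|Ha]; apply in_or_app; auto.
Qed.

End OHFM.

Theorem mainTheorem12 (d : nat) (M : nvec -> Prop) :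
  submonoid_Nd d M -> OHFM M ->
  (forall F, is_face (cone_of M) F -> UFM (face_submonoid M F)) \/
  (exists F0, is_face (cone_of M) F0 /\
     forall F, is_face (cone_of M) F ->
       (~ UFM (face_submonoid M F) <-> (forall v, F0 v -> F v))).
Proof.
  intros Hsub Hohfm.
  destruct (classic (forall F, is_face (cone_of M) F -> UFM (face_submonoid M F)))
    as [Hall|Hsome]; [left; exact Hall | right].
  apply not_all_ex_not in Hsome as [F1 Hsome]; apply imply_to_and in Hsome as [HF1 HU1].
  destruct (nonUFM_gap_pair d M Hsub Hohfm F1 HF1 HU1) as [z [z' [Hz _]]].
  destruct (gap_pair_disjoint M z z' Hz) as [u [u' [Hu Hdisj]]].
  set (NonUFM := fun G => is_face (cone_of M) G /\ ~ UFM (face_submonoid M G)).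
  exists (fun v => cone_of M v /\ forall G, NonUFM G -> G v). split.
  - apply intersection_face; [apply cone_of_is_cone | intros G HG; apply HG].
  - intros F HF; split.
    + intros HU v [_ Hv]; exact (Hv F (conj HF HU)).
    + intros Hincl. apply (gap_pair_not_UFM d M Hsub F u u'); auto.
      assert (Atoms : Forall (is_atom M) (u ++ u'))
        by (apply Forall_app; split; [exact (proj1 Hu) | exact (proj1 (proj2 Hu))]).
      rewrite Forall_forall in Atoms |- *. intros a Ha. apply Hincl. split.
      * apply cone_embed, Atoms, Ha.
      * intros G [HG HU]. revert a Ha; apply Forall_forall.
        exact (gap_pair_in_nonUFM_faces d M Hsub Hohfm u u' G Hu Hdisj HG HU).
Qed.
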